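(* Let $I\subseteq R$ be a good ideal and let $(a_1,\dots,a_n),(b_1,\dots,b_n)\in\mathbb N^n$ with $a_i\le b_i$ for all $i$. Then $I_{a_1,\dots,a_n}\subseteq I_{b_1,\dots,b_n}$.
   Context: Let $\mathbb K$ be a field, $R=\mathbb K[x_1,\dots,x_n]$, $\mathfrak m=\langle x_1,\dots,x_n\rangle$, $\mathbb N=\{0,1,2,\dots\}$. A monomial $x_1^{\alpha_1}\cdots x_n^{\alpha_n}$ is identified with the point $(\alpha_1,\dots,\alpha_n)\in\mathbb N^n$. For a monomial ideal $I$, $G(I)$ denotes its (unique) minimal monomial generating set. If $I$ is an $\mathfrak m$-primary monomial ideal, then for each $i$ there is a unique $d_i\ge1$ with $x_i^{d_i}\in G(I)$; write $\mu_i=x_i^{d_i}$. For $(a_1,\dots,a_n)\in\mathbb N^n$ the box associated to $I$ is $B_{a_1,\dots,a_n}=([a_1d_1,(a_1+1)d_1]\times\cdots\times[a_nd_n,(a_n+1)d_n])\cap\mathbb N^n$; a monomial belongs to a box if its exponent vector does. An $\mathfrak m$-primary monomial ideal $I$ is called good if for every integer $l\ge1$, every element of $G(I^l)$ belongs to some box $B_{a_1,\dots,a_n}$ with $a_1+\dots+a_n=l-1$. For a good ideal $I$ and $a=(a_1,\dots,a_n)\in\mathbb N^n$, with $l=a_1+\dots+a_n+1$, define $I_{a_1,\dots,a_n}=\left\langle \frac{m}{\mu_1^{a_1}\cdots\mu_n^{a_n}} : m\in B_{a_1,\dots,a_n}\cap G(I^l)\right\rangle$. *)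

(* Monomial ideals of K[x_1..x_n] are modelled by their
   sets of monomials (exponent vectors 'I_n -> nat). *)
From mathcomp Require Import all_boot.
Set Implicit Arguments. Unset Strict Implicit. Unset Printing Implicit Defensive.

(* exponent vectors = monomials of K[x_1,...,x_n] (variable x_{i+1} <-> i : 'I_n) *)
Definition mon (n : nat) := 'I_n -> nat.

Definition mdiv n (m m' : mon n) : Prop := forall i, m i <= m' i.

Definition madd n (m m' : mon n) : mon n := fun i => m i + m' i.
Definition mone n : mon n := fun _ => 0.
Definition xpow n (i : 'I_n) (d : nat) : mon n := fun j => if j == i then d else 0.

Definition monideal n (I : mon n -> Prop) : Prop :=
  forall m m', I m -> mdiv m m' -> I m'.

Definition mingen n (I : mon n -> Prop) (m : mon n) : Prop :=
  I m /\ forall m', I m' -> mdiv m' m -> mdiv m m'.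

Fixpoint mpow n (I : mon n -> Prop) (l : nat) : mon n -> Prop :=
  match l with
  | 0 => fun _ => True
  | l'.+1 => fun m => exists a b, I a /\ mpow I l' b /\ mdiv (madd a b) m
  end.

Definition mprimary n (I : mon n -> Prop) : Prop :=
  ~ I (@mone n) /\ forall i : 'I_n, exists d, I (xpow i d).

Definition pure_exps n (I : mon n -> Prop) (d : 'I_n -> nat) : Prop :=
  forall i, 1 <= d i /\ mingen I (xpow i (d i)).

Definition inbox n (d : 'I_n -> nat) (a : 'I_n -> nat) (m : mon n) : Prop :=
  forall i, a i * d i <= m i <= (a i).+1 * d i.

Definition asum n (a : 'I_n -> nat) : nat := \sum_(i < n) a i.

Definition good n (I : mon n -> Prop) (d : 'I_n -> nat) : Prop :=
  mprimary I /\ pure_exps I d /\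
  forall l, 1 <= l -> forall m, mingen (mpow I l) m ->
    exists a : 'I_n -> nat, asum a = l.-1 /\ inbox d a m.

(* I_{a_1..a_n}: generated by m / (mu_1^{a_1} ... mu_n^{a_n}), m in B_a \cap G(I^l) *)
Definition Ia n (I : mon n -> Prop) (d : 'I_n -> nat) (a : 'I_n -> nat) : mon n -> Prop :=
  fun v => exists m, inbox d a m /\ mingen (mpow I (asum a).+1) m /\
             mdiv (fun i => m i - a i * d i) v.

From mathcomp Require Import all_boot zify.
From Stdlib Require Import Classical.

Set Implicit Arguments. Unset Strict Implicit. Unset Printing Implicit Defensive.

(* Let m be a minimal generator of I^(|a|+1) in the box B_a.  Then m mu^(b-a) lies in
   I^(|b|+1), hence is divisible by a minimal generator w of I^(|b|+1), and it suffices
   that mu^b divides w: then w / mu^b divides m / mu^a.  Goodness puts w in a box B_c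
   with |c| = |b|.  If c <= b then c = b.  Otherwise some c_k > b_k forces
   m_k = (a_k+1) d_k, so by minimality m = mu^(a+e_k) and w divides mu^(b+e_k).  But a
   monomial of I^L dividing mu^e with |e| = L equals mu^e, so w = mu^(b+e_k). *)

Section MonomialPowers.

Variable n : nat.
Implicit Types (J : mon n -> Prop) (u v w : mon n) (c e : 'I_n -> nat).

Lemma mdiv_trans u v w : mdiv u v -> mdiv v w -> mdiv u w.
Proof. by move=> uv vw i; apply: leq_trans (uv i) (vw i). Qed.

Lemma mpow_mdiv I k u v : mpow I k u -> mdiv u v -> mpow I k v.
Proof.
case: k => [//|k] /= [x [y [Ix [Iy xy_u]]]] uv.
by exists x, y; do 2!split=> //; apply: mdiv_trans xy_u uv.
Qed.

Lemma mpowD I k l u v : mpow I k u -> mpow I l v -> mpow I (k + l) (madd u v).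
Proof.
elim: k u => [|k IHk] u Iu Iv.
  by apply: mpow_mdiv Iv _ => i; rewrite /madd leq_addl.
case: Iu => [x [y [Ix [Iy xy_u]]]].
exists x, (madd y v); do 2!split=> //; first exact: IHk.
by move=> i; rewrite /madd addnA leq_add2r; apply: xy_u.
Qed.

Lemma mpow_scale I L p u : mpow I L u -> mpow I (p * L) (fun i => p * u i).
Proof.
move=> Iu; elim: p => [|p IHp]; first by rewrite mul0n.
by rewrite mulSn; apply: mpow_mdiv (mpowD Iu IHp) _ => i; rewrite /madd mulSn.
Qed.

Lemma asum_gap c e i k :
  (forall t, c t <= e t) -> c i + k <= e i -> asum c + k <= asum e.
Proof.
move=> ce cei; rewrite /asum (bigD1 i) //= [X in _ <= X](bigD1 i) //= addnAC.
by apply: leq_add cei _; apply: leq_sum => t _.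
Qed.

Lemma asum_leq_eq c e : asum c = asum e -> (forall t, c t <= e t) -> forall t, c t = e t.
Proof.
move=> c_e ce t; apply/eqP; rewrite eqn_leq ce leqNgt; apply/negP => ect.
by rewrite -addn1 in ect; have := asum_gap ce ect; rewrite c_e addn1 ltnn.
Qed.

Lemma asumD1 c k : asum (fun t => c t + (t == k)) = (asum c).+1.
Proof.
rewrite /asum big_split /= -addn1; congr (_ + _).
by rewrite (bigD1 k) //= eqxx big1 // => t /negbTE ->.
Qed.

Lemma mingen_exists J u : J u -> exists2 v, mingen J v & mdiv v u.
Proof.
have [s] := ubnP (asum u); elim: s u => // s IH u /ltnSE u_le_s Ju.
case: (classic (exists v, [/\ J v, mdiv v u & ~ mdiv u v]))
  => [[v [Jv vu /not_all_ex_not [i /negP]]]|no_smaller].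
  rewrite -ltnNge -addn1 => vi_lt_ui.
  have [|w w_min wv] := IH v _ Jv.
    by apply: leq_trans u_le_s; rewrite -addn1; apply: asum_gap vu vi_lt_ui.
  by exists w => //; apply: mdiv_trans wv vu.
exists u => //; split=> // v Jv vu; apply: NNPP => uv.
by apply: no_smaller; exists v.
Qed.

Lemma mingen_eq J u v : mingen J u -> J v -> mdiv v u -> forall i, u i = v i.
Proof.
by move=> [_ u_min] Jv vu i; apply/eqP; rewrite eqn_leq vu (u_min v).
Qed.

Definition mu_pow d e : mon n := fun i => e i * d i.

Lemma mpow_mu_pow I d : pure_exps I d -> forall e, mpow I (asum e) (mu_pow d e).
Proof.
move=> d_pure e; have [s e_sum] : {s | asum e = s} by exists (asum e).
rewrite e_sum; elim: s e e_sum => [//|s IHs] e e_sum.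
have [i ei_gt0] : exists i, 0 < e i.
  have : \sum_t e t != 0 by move: e_sum; rewrite /asum => ->.
  by rewrite sum_nat_eq0 negb_forall => /existsP [i /=]; rewrite -lt0n; exists i.
pose e' t := e t - (t == i).
have e_eq t : e t = e' t + (t == i).
  by rewrite subnK //; case: eqP => [->|].
have e'_sum : asum e' = s.
  by apply: succn_inj; rewrite -(asumD1 _ i) -e_sum; apply: eq_bigr => t _; rewrite -e_eq.
exists (xpow i (d i)), (mu_pow d e'); split; first by case: (d_pure i) => _ [].
split; first exact: IHs.
move=> t; rewrite /madd /xpow /mu_pow [in leqRHS]e_eq mulnDl addnC.
by case: eqP => [->|]; rewrite ?mul1n.
Qed.

Section GoodIdeal.

Variables (I : mon n -> Prop) (d : 'I_n -> nat).
Hypothesis I_good : good I d.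

Let d_pure : pure_exps I d := proj1 (proj2 I_good).
Let d_gt0 t : 0 < d t := proj1 (d_pure t).

Lemma mpow_above_mu_pow L u :
  0 < L -> mpow I L u -> exists2 c, asum c = L.-1 & mdiv (mu_pow d c) u.
Proof.
move=> L_gt0 /mingen_exists [v v_min vu].
have [c [c_sum c_box]] := proj2 (proj2 I_good) L L_gt0 v v_min.
by exists c => // t; apply: leq_trans (vu t); case/andP: (c_box t).
Qed.

Lemma mpow_mdiv_mu_pow_eq L e u : 0 < L -> asum e = L -> mpow I L u ->
  mdiv u (mu_pow d e) -> forall i, u i = e i * d i.
Proof.
move=> L_gt0 e_sum Iu ue i; apply/eqP; rewrite eqn_leq ue leqNgt; apply/negP => ui_lt.
(* Scaling by p = 2 d_i turns the deficit in u_i into a deficit of 2 in the box index,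
   more than the slack between |c| = pL - 1 and pL. *)
pose p := 2 * d i.
have pL_gt0 : 0 < p * L by rewrite !muln_gt0 d_gt0.
have [c c_sum cu] := mpow_above_mu_pow pL_gt0 (mpow_scale p Iu).
have ce t : c t <= p * e t.
  rewrite -(leq_pmul2r (d_gt0 t)) -mulnA; apply: leq_trans (cu t) _.
  by rewrite leq_mul2l ue orbT.
have cei : c i + 2 <= p * e i.
  rewrite -(leq_pmul2r (d_gt0 i)) mulnDl -mulnA.
  apply: leq_trans (leq_add (cu i) (leqnn _)) _.
  by rewrite -[2 * d i]/p -mulnSr leq_mul2l ui_lt orbT.
have pe_sum : asum (fun t => p * e t) = p * L by rewrite -e_sum /asum big_distrr.
have := asum_gap ce cei; rewrite c_sum pe_sum.
by move: pL_gt0; lia.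
Qed.

Lemma mu_pow_mdiv_shift a b m w : (forall t, a t <= b t) ->
  mingen (mpow I (asum a).+1) m -> inbox d a m -> mpow I (asum b).+1 w ->
  (forall t, w t <= m t - a t * d t + b t * d t) -> mdiv (mu_pow d b) w.
Proof.
move=> ab m_min m_box Iw w_le.
have [//|c c_sum cw] := mpow_above_mu_pow _ Iw.
case: (boolP [exists k, b k < c k]) => [/existsP [k bk_lt_ck]|/existsP no_k]; last first.
  have cb t : c t <= b t by rewrite leqNgt; apply/negP => ?; apply: no_k; exists t.
  by move=> t; rewrite /mu_pow -(asum_leq_eq c_sum cb t); apply: cw.
have m_top : (a k).+1 * d k <= m k.
  have : (b k).+1 * d k <= c k * d k by rewrite leq_mul2r bk_lt_ck orbT.
  have := cw k; have := w_le k; case/andP: (m_box k); rewrite /mu_pow !mulSn; lia.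
have m_eq : forall t, m t = (a t + (t == k)) * d t.
  have := mpow_mu_pow d_pure (fun t => a t + (t == k)); rewrite asumD1 => I_mu.
  apply: mingen_eq m_min I_mu _ => t; rewrite /mu_pow mulnDl.
  case: eqP => [->|_]; last by rewrite mul0n addn0; case/andP: (m_box t).
  by rewrite mul1n addnC -mulSn.
have w_eq := mpow_mdiv_mu_pow_eq (ltn0Sn _) (asumD1 b k) Iw.
move=> t; rewrite w_eq => [|j]; first by rewrite /mu_pow leq_mul2r leq_addr orbT.
by apply: leq_trans (w_le j) _; rewrite m_eq /mu_pow !mulnDl addKn addnC.
Qed.

End GoodIdeal.

End MonomialPowers.

Theorem mainTheorem5 (n : nat) (I : mon n -> Prop) (d : 'I_n -> nat)
  (hI : monideal I) (hd : pure_exps I d) (hgood : good I d)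
  (a b : 'I_n -> nat) (hab : forall i, a i <= b i) :
  forall v : mon n, Ia I d a v -> Ia I d b v.
Proof.
move=> v [m [m_box [m_min mv]]].
pose m' t := m t - a t * d t + b t * d t.
have Im' : mpow I (asum b).+1 m'.
  have b_sum : asum b = asum a + asum (fun t => b t - a t).
    by rewrite /asum -big_split; apply: eq_bigr => t _ /=; rewrite subnKC.
  rewrite b_sum -addSn; apply: mpow_mdiv (mpowD m_min.1 (mpow_mu_pow hd _)) _ => t.
  have ab_d : a t * d t <= b t * d t by rewrite leq_mul2r hab orbT.
  by rewrite /madd /mu_pow /m' mulnBl; case/andP: (m_box t); lia.
have [w w_min wm'] := mingen_exists Im'.
have bw := mu_pow_mdiv_shift hgood hab m_min m_box w_min.1 wm'.
exists w; split; [|split=> //] => t; have := bw t; have := wm' t;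
  case/andP: (m_box t); have := mv t; rewrite /mu_pow /m' mulSn; lia.
Qed.
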